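(* Let $V$ be a nonzero finite-dimensional complex vector space with a norm $\lVert\cdot\rVert$, and let $G\le\mathrm U(V)$ be a finite group. Let $M=\{x\in G : \lVert \mathrm{id}_V-x\rVert_{\mathrm{op}}<1/2\}$ and let $A$ be the subgroup of $G$ generated by $M$. Then $A$ is an abelian normal subgroup of $G$.
   Context: $\mathrm U(V)$ denotes the group of linear isometries of $V$, i.e. the set of $x\in\mathrm{GL}(V)$ with $\lVert xv\rVert=\lVert v\rVert$ for all $v\in V$. For $a\in\mathrm{End}(V)$, the operator norm is $\lVert a\rVert_{\mathrm{op}}=\max\{\lVert av\rVert : v\in V,\ \lVert v\rVert=1\}$. *)

From HB Require Import structures.
From mathcomp Require Import all_boot all_order all_algebra.
From mathcomp Require Import complex.
From mathcomp Require Import classical_sets reals.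
Set Implicit Arguments. Unset Strict Implicit. Unset Printing Implicit Defensive.
Import Order.TTheory GRing.Theory Num.Theory.
Local Open Scope ring_scope.
Local Open Scope classical_set_scope.

(* V = C^n (row vectors), n >= 1 written n.+1; C = R[i] with R : realType.
   Linear endomorphisms of V are matrices acting on the right: v |-> v *m a. *)

Definition is_norm (R : realType) (n : nat) (N : 'rV[R[i]]_n -> R) : Prop :=
  [/\ forall v, 0 <= N v,
      forall v, N v = 0 -> v = 0,
      forall (a : R[i]) v, N (a *: v) = Normc.normc a * N v
    & forall u v, N (u + v) <= N u + N v].

Definition opnorm (R : realType) (n : nat) (N : 'rV[R[i]]_n -> R)
  (a : 'M[R[i]]_n) : R :=
  sup [set N (v *m a) | v in [set v | N v = 1]].

Definition is_isometry (R : realType) (n : nat) (N : 'rV[R[i]]_n -> R)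
  (x : 'M[R[i]]_n) : Prop :=
  x \in unitmx /\ forall v, N (v *m x) = N v.

Definition is_subgroup_GL (R : realType) (n : nat) (G : 'M[R[i]]_n -> Prop)
  : Prop :=
  [/\ G 1%:M,
      forall x, G x -> x \in unitmx,
      forall x y, G x -> G y -> G (x *m y)
    & forall x, G x -> G (invmx x)].

Definition generated (R : realType) (n : nat) (M : 'M[R[i]]_n -> Prop)
  : 'M[R[i]]_n -> Prop :=
  fun x => forall H, is_subgroup_GL H -> (forall y, M y -> H y) -> H x.

From HB Require Import structures.
From mathcomp Require Import all_boot all_order all_algebra.
From mathcomp Require Import complex.
From mathcomp Require Import classical_sets reals lra.
Set Implicit Arguments.
Unset Strict Implicit.
Unset Printing Implicit Defensive.

Import Order.TTheory GRing.Theory Num.Theory.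
Local Open Scope ring_scope.

(* Write a(x) for the operator norm of 1 - x.  For isometries x and y the
   commutator c = x y x^-1 y^-1 satisfies
   (1 - c) y x = (1 - y)(1 - x) - (1 - x)(1 - y), so a(c) <= 2 a(x) a(y),
   which is < a(x) when a(y) < 1/2.  If moreover c commutes with y, then
   y^k x = c^-k x y^k yields a(c^-k) <= 2 a(x) < 1 for every k, and averaging
   the powers of the finite-order element c^-1 forces c = 1.  As G is finite,
   a descent on a(x) shows that the elements of M commute pairwise, so the
   group A they generate is abelian; A is normal since conjugation by an
   isometry does not increase a. *)

Lemma normc_real (R : rcfType) (r : R) : Normc.normc (r%:C)%C = `|r|.
Proof. by rewrite /Normc.normc /= expr0n /= addr0 sqrtr_sqr. Qed.

Section OperatorBounds.
Variables (R : realType) (n : nat) (N : 'rV[R[i]]_n -> R).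
Hypothesis Nnorm : is_norm N.

Lemma norm_ge0 v : 0 <= N v. Proof. by case: Nnorm. Qed.

Lemma norm_eq0 v : N v = 0 -> v = 0. Proof. by case: Nnorm => _ + _ _; apply. Qed.

Lemma norm_scale_real (r : R) v : N ((r%:C)%C *: v) = `|r| * N v.
Proof. by case: Nnorm => _ _ hs _; rewrite hs normc_real. Qed.

Lemma norm_natmul v q : N (v *+ q) = q%:R * N v.
Proof.
by rewrite -scaler_nat -[q%:R](rmorph_nat (real_complex R)) norm_scale_real normr_nat.
Qed.

Lemma norm0 : N 0 = 0.
Proof. by rewrite -(mulr0n (0 : 'rV[R[i]]_n)) norm_natmul mul0r. Qed.

Lemma norm_opp v : N (- v) = N v.
Proof.
rewrite -scaleN1r -[-1](rmorphN1 (real_complex R)) norm_scale_real.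
by rewrite normrN1 mul1r.
Qed.

Lemma norm_triangle u v : N (u + v) <= N u + N v. Proof. by case: Nnorm. Qed.

Definition opbounded (a : 'M[R[i]]_n) (r : R) := forall v, N (v *m a) <= r * N v.

Lemma opbounded_eq0 a : opbounded a 0 -> a = 0.
Proof.
move=> ha; apply/row_matrixP => i; rewrite rowE row0; apply: norm_eq0.
by apply/le_anti; rewrite norm_ge0 andbT -(mul0r (N (delta_mx 0 i))).
Qed.

Lemma opbounded1 : opbounded 1 1.
Proof. by move=> v; rewrite mulmx1 mul1r. Qed.

Lemma opboundedD a b r s : opbounded a r -> opbounded b s -> opbounded (a + b) (r + s).
Proof.
move=> ha hb v; rewrite mulmxDr mulrDl.
by apply: le_trans (norm_triangle _ _) _; apply: lerD.
Qed.

Lemma opboundedN a r : opbounded a r -> opbounded (- a) r.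
Proof. by move=> ha v; rewrite mulmxN norm_opp. Qed.

Lemma opboundedB a b r s : opbounded a r -> opbounded b s -> opbounded (a - b) (r + s).
Proof. by move=> ha hb; apply: opboundedD (opboundedN hb). Qed.

Lemma opboundedM a b r s : 0 <= s -> opbounded a r -> opbounded b s -> opbounded (a * b) (r * s).
Proof.
move=> s0 ha hb v; rewrite -mulmxE mulmxA; apply: le_trans (hb _) _.
by rewrite mulrAC mulrC; exact: ler_wpM2r.
Qed.

Lemma opbounded_sum (I : Type) (s : seq I) (F : I -> 'M_n) r :
  (forall i, opbounded (F i) r) -> opbounded (\sum_(i <- s) F i) ((size s)%:R * r).
Proof.
move=> hF; elim: s => [|i s IH]; first by move=> v; rewrite big_nil mulmx0 norm0 !mul0r.
by rewrite big_cons /= -add1n natrD mulrDl mul1r; apply: opboundedD.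
Qed.

Lemma finite_order_near1_eq1 d q r :
  d ^+ q.+1 = 1 -> r < 1 -> (forall k, opbounded (d ^+ k - 1) r) -> d = 1.
Proof.
move=> dq r1 hd.
(* E = sum_k (1 - d^k) satisfies E^2 = (q+1) E and is bounded by (q+1) r, so
   E = 0, i.e. the average S / (q+1) of the powers of d is 1; and d S = S. *)
pose S := \sum_(0 <= k < q.+1) d ^+ k.
have dS : d * S = S.
  rewrite mulr_sumr; under eq_bigr do rewrite -exprS.
  by rewrite big_nat_recr //= dq /S big_nat_recl //= expr0 addrC.
have SS : S * S = S *+ q.+1.
  have dkS k : d ^+ k * S = S.
    by elim: k => [|k IH]; rewrite ?mul1r // exprSr -mulrA dS.
  by rewrite {1}/S mulr_suml (eq_bigr _ (fun k _ => dkS k)) sumr_const_nat subn0.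
pose E := q.+1%:R - S.
have ES : E * S = 0 by rewrite mulrBl SS mulr_natl subrr.
have EE : E * E = E *+ q.+1 by rewrite {2}/E mulrBr ES subr0 mulr_natr.
have bE : opbounded E (q.+1%:R * r).
  have -> : E = \sum_(0 <= k < q.+1) (1 - d ^+ k).
    by rewrite sumrB sumr_const_nat subn0.
  have := @opbounded_sum _ (index_iota 0 q.+1) (fun k => 1 - d ^+ k) r.
  rewrite size_iota subn0; apply=> k.
  by rewrite -opprB; apply: opboundedN.
have E0 : E = 0.
  apply: opbounded_eq0 => v; rewrite mul0r.
  have EEm : E *m E = E *+ q.+1 := EE.
  have := bE (v *m E); rewrite -mulmxA EEm -scaler_nat -scalemxAr scaler_nat.
  rewrite norm_natmul -mulrA ler_pM2l ?ltr0Sn // => h.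
  have := norm_ge0 (v *m E); nra.
have {E0}SE : S = q.+1%:R by apply/esym/subr0_eq.
apply: (scalerI (_ : (q.+1%:R : R[i]) != 0)); first by rewrite pnatr_eq0.
by rewrite !scaler_nat -mulr_natr -SE dS.
Qed.

End OperatorBounds.

Section OperatorNorm.
Variables (R : realType) (n : nat) (N : 'rV[R[i]]_n.+1 -> R).
Hypothesis Nnorm : is_norm N.
Local Open Scope classical_set_scope.

Let sphere_image a := [set N (v *m a) | v in [set v | N v = 1]].

Let normalize_unit v : N v != 0 -> N (((N v)^-1)%:C%C *: v) = 1.
Proof.
move=> nv; rewrite norm_scale_real // ger0_norm ?mulVf // invr_ge0.
exact: norm_ge0.
Qed.

Let const1_norm_neq0 : N (const_mx 1) != 0.
Proof.
apply/eqP => /(norm_eq0 Nnorm) /matrixP /(_ ord0 ord0) /eqP.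
by rewrite !mxE oner_eq0.
Qed.

Let sphere_image_sup a C : opbounded N a C -> has_sup (sphere_image a).
Proof.
move=> ha; split.
  pose u : 'rV_n.+1 := ((N (const_mx 1))^-1)%:C%C *: const_mx 1.
  by exists (N (u *m a)); exists u; first exact: normalize_unit const1_norm_neq0.
by exists C; move=> _ [v /= v1 <-]; rewrite -[C]mulr1 -v1.
Qed.

Lemma opnorm_le a C : opbounded N a C -> opnorm N a <= C.
Proof.
move=> ha; apply: ge_sup; first by case: (sphere_image_sup ha).
by move=> _ [v /= v1 <-]; rewrite -[C]mulr1 -v1.
Qed.

Lemma opnorm_bounded a C : opbounded N a C -> opbounded N a (opnorm N a).
Proof.
move=> ha v; have [/(norm_eq0 Nnorm) ->|nv0] := eqVneq (N v) 0.
  by rewrite mul0mx norm0 // mulr0.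
have vpos : 0 < N v by rewrite lt0r nv0 norm_ge0.
have := sup_upper_bound (sphere_image_sup ha) (ex_intro2 _ _ _ (normalize_unit nv0) erefl).
rewrite -scalemxAl norm_scale_real // ger0_norm ?invr_ge0 ?norm_ge0 //.
by rewrite ler_pdivrMl // mulrC.
Qed.

Lemma opnorm_ge0 a C : opbounded N a C -> 0 <= opnorm N a.
Proof.
move=> /opnorm_bounded /(_ (const_mx 1)) h.
have c1pos : 0 < N (const_mx 1) by rewrite lt0r const1_norm_neq0 norm_ge0.
by rewrite -(pmulr_lge0 _ c1pos); apply: le_trans h; apply: norm_ge0.
Qed.

End OperatorNorm.

Lemma mulr_1B_swapB (R : pzRingType) (x y : R) :
  (1 - y) * (1 - x) - (1 - x) * (1 - y) = y * x - x * y.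
Proof.
rewrite !mulrBl !mulrBr !mul1r !mulr1 !opprB.
by rewrite addrACA !addrA !subrK addrC !addrA addNr add0r addrC.
Qed.

Section Isometries.
Variables (R : realType) (n : nat) (N : 'rV[R[i]]_n.+1 -> R).
Hypothesis Nnorm : is_norm N.
Implicit Types (a d x y : 'M[R[i]]_n.+1).

Lemma isometry1 : is_isometry N 1.
Proof. by split=> [|v]; rewrite ?unitmx1 ?mulmx1. Qed.

Lemma isometryM x y : is_isometry N x -> is_isometry N y -> is_isometry N (x * y).
Proof.
move=> [xu hx] [yu hy]; split=> [|v]; first by rewrite unitmx_mul xu.
by rewrite -mulmxE mulmxA hy hx.
Qed.

Lemma isometryX x k : is_isometry N x -> is_isometry N (x ^+ k).
Proof.
by move=> hx; elim: k => [|k IH]; rewrite ?expr0 ?exprS; [exact: isometry1 | exact: isometryM].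
Qed.

Lemma opbounded_isometryl x a r : is_isometry N x -> opbounded N a r -> opbounded N (x * a) r.
Proof. by move=> [_ hx] ha v; rewrite -mulmxE mulmxA -(hx v). Qed.

Lemma opbounded_isometryr x a r : is_isometry N x -> opbounded N a r -> opbounded N (a * x) r.
Proof. by move=> [_ hx] ha v; rewrite -mulmxE mulmxA hx. Qed.

Lemma opbounded_isometry_cancelr x a r :
  is_isometry N x -> opbounded N (a * x) r -> opbounded N a r.
Proof. by move=> [_ hx] ha v; rewrite -(hx (v *m a)) -mulmxA mulmxE. Qed.

Lemma opbounded_1_sub_isometry x : is_isometry N x -> opbounded N (1 - x) 2.
Proof.
move=> [_ hx]; apply: opboundedB => //; first exact: opbounded1.
by move=> v; rewrite hx mul1r.
Qed.

Lemma twisted_commutation_eq1 x y d r q :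
  is_isometry N x -> is_isometry N y -> opbounded N (1 - x) r -> r < 1 / 2 ->
  d ^+ q.+1 = 1 -> d * y = y * d -> y * x = d * x * y -> d = 1.
Proof.
move=> ix iy hx r_lt dq dy yx.
have yxk k : y ^+ k * x = d ^+ k * x * y ^+ k.
  elim: k => [|k IH]; first by rewrite !expr0 mul1r mulr1.
  rewrite exprS -mulrA IH !mulrA (commrX k (esym dy)) -(mulrA _ y x) yx.
  by rewrite exprSr !mulrA.
apply: (finite_order_near1_eq1 Nnorm dq (_ : r + r < 1)) => [|k]; first lra.
have e : (d ^+ k - 1) * (x * y ^+ k) = (1 - x) * y ^+ k - y ^+ k * (1 - x).
  rewrite mulrBl mul1r mulrA -yxk !mulrBl !mulrBr !mul1r !mulr1.
  by rewrite [RHS]addrC opprB addrA subrK.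
apply: (opbounded_isometry_cancelr (isometryM ix (isometryX k iy))).
rewrite e; apply: (opboundedB Nnorm).
  exact: opbounded_isometryr (isometryX k iy) hx.
exact: opbounded_isometryl (isometryX k iy) hx.
Qed.

Lemma opbounded_1_sub_commutator x y r s :
  is_isometry N x -> is_isometry N y -> 0 <= r -> 0 <= s ->
  opbounded N (1 - x) r -> opbounded N (1 - y) s ->
  opbounded N (1 - x * y * x^-1 * y^-1) (s * r + r * s).
Proof.
move=> ix iy r0 s0 hx hy.
have e : (1 - x * y * x^-1 * y^-1) * (y * x) = (1 - y) * (1 - x) - (1 - x) * (1 - y).
  have [xu yu] : x \is a GRing.unit /\ y \is a GRing.unit by case: ix; case: iy.
  by rewrite mulrBl mul1r !mulrA mulrVK // mulrVK // mulr_1B_swapB.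
apply: (opbounded_isometry_cancelr (isometryM iy ix)).
by rewrite e; apply: (opboundedB Nnorm); apply: opboundedM.
Qed.

End Isometries.

Lemma sub_count_lt (T : eqType) (p q : pred T) (s : seq T) z :
  subpred p q -> z \in s -> q z -> ~~ p z -> (count p s < count q s)%N.
Proof.
move=> pq; elim: s => [//|y s IH]; rewrite inE => /predU1P[<- qz pz|zs qz pz] /=.
  by rewrite (negbTE pz) qz add0n add1n ltnS sub_count.
have := IH zs qz pz; case: (boolP (p y)) => [/pq -> /=|_]; first by rewrite !add1n.
by move=> lt_pq; apply: leq_trans lt_pq (leq_addl _ _).
Qed.

Section FiniteSubgroup.
Variables (R : realType) (n : nat) (G : seq 'M[R[i]]_n.+1).
Hypothesis subG : is_subgroup_GL (fun x => x \in G).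

Lemma subgroup_exp x k : x \in G -> x ^+ k \in G.
Proof.
have [G1 _ GM _] := subG; move=> xG.
by elim: k => [|k IH]; rewrite ?expr0 ?exprS //; apply: GM.
Qed.

Lemma subgroup_finite_order x : x \in G -> exists q, x ^+ q.+1 = 1.
Proof.
move=> xG; have [_ Gu _ _] := subG.
pose s := mkseq (fun k => x ^+ k) (size G).+1.
have sG : {subset s <= G} by move=> _ /mapP[k _ ->]; apply: subgroup_exp.
have /uniqPn : ~~ uniq s.
  by apply/negP => /uniq_leq_size/(_ sG); rewrite size_mkseq ltnn.
case/(_ 0) => i [j [lt_ij]]; rewrite size_mkseq => lt_j.
rewrite !nth_mkseq ?(ltn_trans lt_ij) // => eq_xij.
exists (j - i.+1)%N; rewrite -subSn // subSS.
have xiu : x ^+ i \is a GRing.unit by rewrite unitrX // Gu.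
by apply: (mulrI xiu); rewrite -exprD subnKC ?mulr1 // ltnW.
Qed.

End FiniteSubgroup.

Section NearIdentity.
Variables (R : realType) (n : nat) (N : 'rV[R[i]]_n.+1 -> R) (G : seq 'M[R[i]]_n.+1).
Hypotheses (Nnorm : is_norm N) (subG : is_subgroup_GL (fun x => x \in G))
  (isoG : forall x, x \in G -> is_isometry N x).

Let dist1 x := opnorm N (1 - x).

Let dist1_bounded x : x \in G -> opbounded N (1 - x) (dist1 x).
Proof. by move=> /isoG /(opbounded_1_sub_isometry Nnorm) /(opnorm_bounded Nnorm). Qed.

Let dist1_ge0 x : x \in G -> 0 <= dist1 x.
Proof. by move=> /isoG /(opbounded_1_sub_isometry Nnorm) /(opnorm_ge0 Nnorm). Qed.

Let closer_count x := count (fun z => dist1 z < dist1 x) G.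

Lemma near1_commute x y : x \in G -> y \in G ->
  dist1 x < 1 / 2 -> dist1 y < 1 / 2 -> x * y = y * x.
Proof.
have [_ Gu GM GV] := subG; move=> + yG + ay.
(* descent on the number of elements of G strictly closer to 1 than x *)
have [k] : exists k, (closer_count x < k)%N by eexists.
elim: k x => // k IH x lt_k xG ax.
have [ax0|ax_neq0] := eqVneq (dist1 x) 0.
  have /(opbounded_eq0 Nnorm)/subr0_eq <- : opbounded N (1 - x) 0.
    by rewrite -ax0; apply: dist1_bounded.
  by rewrite mul1r mulr1.
have ax_gt0 : 0 < dist1 x by rewrite lt0r ax_neq0 dist1_ge0.
pose c := x * y * x^-1 * y^-1.
have cG : c \in G by rewrite !GM ?GV.
have lt_acx : dist1 c < dist1 x.
  have := opbounded_1_sub_commutator Nnorm (isoG xG) (isoG yG) (dist1_ge0 xG)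
    (dist1_ge0 yG) (dist1_bounded xG) (dist1_bounded yG).
  move=> /(opnorm_le Nnorm); rewrite -/(dist1 c) => le_ac.
  have := dist1_ge0 yG; nra.
have cy : c * y = y * c.
  apply: (IH c _ cG (lt_trans lt_acx ax)).
  rewrite -ltnS; apply: leq_trans lt_k; rewrite ltnS.
  apply: (sub_count_lt (z := c)) => //=; last by rewrite ltxx.
  by move=> z /lt_trans; apply.
have yx : y * x = c^-1 * x * y.
  have cyx : c * (y * x) = x * y by rewrite !mulrA !mulrVK ?Gu.
  by rewrite -mulrA -cyx mulKr ?Gu.
have [q cq] := subgroup_finite_order subG (GV _ cG).
have c1 : c^-1 = 1.
  apply: (twisted_commutation_eq1 Nnorm (isoG xG) (isoG yG) (dist1_bounded xG) ax cq _ yx).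
  by apply/esym/commrV.
by rewrite yx c1 mul1r.
Qed.

Lemma dist1_conj g x : g \in G -> x \in G -> dist1 (g^-1 * x * g) <= dist1 x.
Proof.
have [_ Gu _ GV] := subG; move=> gG xG; rewrite /dist1.
have -> : 1 - g^-1 * x * g = g^-1 * (1 - x) * g.
  by rewrite mulrBr mulrBl mulr1 mulVr ?Gu.
apply: (opnorm_le Nnorm); apply: opbounded_isometryr (isoG gG) _.
exact: opbounded_isometryl (isoG (GV _ gG)) (dist1_bounded xG).
Qed.

End NearIdentity.

Section Generated.
Variables (R : realType) (n : nat).
Implicit Types (M T : 'M[R[i]]_n.+1 -> Prop) (g x y : 'M[R[i]]_n.+1).

Lemma subgroup_centralizer T :
  is_subgroup_GL (fun x => x \in unitmx /\ forall y, T y -> x *m y = y *m x).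
Proof.
split.
- by split=> [|y _]; rewrite ?unitmx1 ?mul1mx ?mulmx1.
- by move=> x [].
- move=> x y [xu cx] [yu cy]; split=> [|w Tw]; first by rewrite unitmx_mul xu.
  by rewrite -mulmxA cy // !mulmxA cx.
- move=> x [xu cx]; split=> [|w Tw]; first by rewrite unitmx_inv.
  exact/esym/commrV/esym/cx.
Qed.

Lemma generated_centralizes M T x :
  (forall y, M y -> y \in unitmx) -> (forall y z, M y -> T z -> y *m z = z *m y) ->
  generated M x -> forall z, T z -> x *m z = z *m x.
Proof.
move=> Mu MT /(_ _ (subgroup_centralizer T)) [|_ //].
by move=> y My; split=> [|z]; [exact: Mu | exact: MT].
Qed.

Lemma generated_abelian M x y :
  (forall y, M y -> y \in unitmx) -> (forall y z, M y -> M z -> y *m z = z *m y) ->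
  generated M x -> generated M y -> x *m y = y *m x.
Proof.
move=> Mu MM Mx My; apply: (generated_centralizes Mu _ Mx My) => z w Mz Mw.
exact/esym/(generated_centralizes Mu MM Mw).
Qed.

Lemma subgroup_conj_preimage (H : 'M[R[i]]_n.+1 -> Prop) g : g \in unitmx ->
  is_subgroup_GL H -> is_subgroup_GL (fun x => x \in unitmx /\ H (invmx g *m x *m g)).
Proof.
move=> gu [H1 Hu HM HV]; split.
- by split; rewrite ?unitmx1 // mulmx1 mulVmx.
- by move=> x [].
- move=> x y [xu Hx] [yu Hy]; split; first by rewrite unitmx_mul xu.
  have -> : invmx g *m (x *m y) *m g = (invmx g *m x *m g) *m (invmx g *m y *m g).
    by rewrite !mulmxA mulmxK.
  exact: HM.
- move=> x [xu Hx]; split; first by rewrite unitmx_inv.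
  have -> : invmx g *m invmx x *m g = invmx (invmx g *m x *m g).
    rewrite !mulmxE; change (g^-1 * x^-1 * g = (g^-1 * x * g)^-1).
    by rewrite !invrM ?invrK ?mulrA ?unitrV ?unitrMr ?unitrV.
  exact: HV.
Qed.

Lemma generated_conj M g x :
  (forall y, M y -> y \in unitmx) -> g \in unitmx ->
  (forall y, M y -> M (invmx g *m y *m g)) ->
  generated M x -> generated M (invmx g *m x *m g).
Proof.
move=> Mu gu Mg Mx H sH MH.
suff [] : x \in unitmx /\ H (invmx g *m x *m g) by [].
apply: Mx (subgroup_conj_preimage gu sH) _ => y My.
by split; [exact: Mu | exact/MH/Mg].
Qed.

End Generated.

Theorem mainTheorem6 (R : realType) (n : nat) (N : 'rV[R[i]]_n.+1 -> R)
  (G : seq 'M[R[i]]_n.+1) :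
  is_norm N ->
  is_subgroup_GL (fun x => x \in G) ->
  (forall x, x \in G -> is_isometry N x) ->
  let M := fun x => x \in G /\ opnorm N (1%:M - x) < 1 / 2 in
  let A := generated M in
  (forall x y, A x -> A y -> x *m y = y *m x) /\
  (forall g x, g \in G -> A x -> A (invmx g *m x *m g)).
Proof.
move=> Nnorm subG isoG M A; have [_ Gu GM GV] := subG.
have Mu y : M y -> y \in unitmx by case=> /Gu.
split=> [x y|g x gG].
  apply: generated_abelian => // u v [uG]; rewrite idmxE => au [vG].
  by rewrite idmxE => av; apply: (near1_commute Nnorm subG isoG).
apply: generated_conj => // [|y [yG]]; first exact: Gu.
rewrite idmxE => ay; split; first by rewrite !GM ?GV.
by rewrite idmxE; apply: le_lt_trans (dist1_conj Nnorm subG isoG gG yG) ay.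
Qed.
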